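(* Let $q$ be a prime power and let $L\subseteq\{0,1,\ldots,q-1\}$. If $\mathcal{F}\subseteq2^{[n]}$ is a $q$-modular $L$-avoiding $L$-intersecting system, then $$|\mathcal{F}|\le\sum_{i=0}^{q-1}\binom{n}{i}.$$
   Context: For $L\subseteq\{0,\ldots,q-1\}$, $\mathcal{F}\subseteq2^{[n]}$ is $q$-modular $L$-intersecting if for all distinct $A,B\in\mathcal{F}$, $|A\cap B|\equiv\ell\pmod q$ for some $\ell\in L$, and $q$-modular $L$-avoiding if for every $A\in\mathcal{F}$, $|A|\not\equiv\ell\pmod q$ for all $\ell\in L$. *)

From mathcomp Require Import all_boot all_order.
Set Implicit Arguments. Unset Strict Implicit. Unset Printing Implicit Defensive.

Definition prime_power (q : nat) : Prop :=
  exists p k : nat, prime p /\ 0 < k /\ q = p ^ k.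

Definition modular_L_intersecting (q n : nat) (L : {set 'I_q})
    (F : {set {set 'I_n}}) : Prop :=
  forall A B, A \in F -> B \in F -> A != B ->
    exists2 l : 'I_q, l \in L & #|A :&: B| = nat_of_ord l %[mod q].

Definition modular_L_avoiding (q n : nat) (L : {set 'I_q})
    (F : {set {set 'I_n}}) : Prop :=
  forall A, A \in F -> forall l : 'I_q, l \in L ->
    #|A| <> nat_of_ord l %[mod q].

From mathcomp Require Import all_boot all_order all_algebra.
Set Implicit Arguments. Unset Strict Implicit. Unset Printing Implicit Defensive.
Import GRing.Theory.

(* Write q = p^k = d + 1 and work over F_p. For A, B in F, summing the weight
   w(|S|) over the sets S of size <= d contained in A :&: B gives
   1 - sum_(l in L) 'C(|A :&: B| + d - l, d) (Vandermonde), and modulo p the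
   binomial 'C(N, d) depends only on N mod q, which turns this into
   1 - #{l in L | |A :&: B| = l mod q}. Since F is L-avoiding and L-intersecting,
   this is 1 if A = B and 0 otherwise. Hence the identity matrix indexed by F
   factors through the space indexed by sets of size <= d, so |F| is at most
   their number, sum_(i < q) 'C(n, i). *)

Lemma prime_dvd_bin_pexp p k i : prime p -> 0 < i < p ^ k -> p %| 'C(p ^ k, i).
Proof.
move=> p_pr /andP[i_gt0 i_lt]; apply/negPn/negP => ndvd.
have cop : coprime (p ^ k) 'C(p ^ k, i) by rewrite coprimeXl // prime_coprime.
have : p ^ k %| i * 'C(p ^ k, i).
  by rewrite -(prednK i_gt0) -mul_bin_diag dvdn_mulr.
by rewrite Gauss_dvdl // => /(dvdn_leq i_gt0); rewrite leqNgt i_lt.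
Qed.

Lemma sum_mod_indicator (R : nzSemiRingType) q (L : {set 'I_q}) m :
  (\sum_(l in L) ((m %% q)%N == l)%:R = [exists l in L, m == l %[mod q]]%:R :> R)%R.
Proof.
case: existsP => [[l /andP[lL /eqP Ml]] | noL].
  rewrite (bigD1 l) //= Ml modn_small // eqxx big1 ?addr0 // => l' /andP[_ l'l].
  by rewrite (inj_eq val_inj) eq_sym (negbTE l'l).
rewrite big1 // => l lL; case: eqP => // Ml; case: noL; exists l.
by rewrite lL /= Ml modn_small.
Qed.

Section PcharBinomial.

Variables (R : nzRingType) (p k : nat).
Hypothesis pcharRp : p \in [pchar R]%R.

Lemma pchar_binDpexp N j : j < p ^ k -> ('C(N + p ^ k, j)%:R = 'C(N, j)%:R :> R)%R.
Proof.
move=> j_lt; rewrite addnC -binomial.Vandermonde natr_sum big_ord_recl bin0 mul1n subn0.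
rewrite big1 ?addr0 // => i _; rewrite natrM.
suff -> : ('C(p ^ k, bump 0 i)%:R = 0 :> R)%R by rewrite mul0r.
apply/eqP; rewrite -(dvdn_pcharf pcharRp).
apply: prime_dvd_bin_pexp (pcharf_prime pcharRp) _.
by rewrite /bump add1n /= (leq_trans _ j_lt) // ltnS.
Qed.

Lemma pchar_bin_modpexp N j : j < p ^ k -> ('C(N, j)%:R = 'C(N %% p ^ k, j)%:R :> R)%R.
Proof.
move=> j_lt; rewrite {1}(divn_eq N (p ^ k)).
elim: (N %/ p ^ k) => [|m IHm]; first by rewrite mul0n add0n.
by rewrite mulSn -addnA addnC pchar_binDpexp // addnC.
Qed.

Lemma pchar_bin_indicator d m l : d.+1 = p ^ k -> l <= d ->
  ('C(m + (d - l), d)%:R = ((m %% d.+1)%N == l)%:R :> R)%R.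
Proof.
move=> qE l_le; rewrite pchar_bin_modpexp -qE //.
have bin_lt r : r < d.+1 -> 'C(r, d) = (r == d).
  rewrite ltnS leq_eqVlt => /predU1P[->|r_lt]; first by rewrite binn eqxx.
  by rewrite bin_small // ltn_eqF.
rewrite bin_lt ?ltn_mod //; congr (nat_of_bool _)%:R%R.
rewrite -[X in _ == X](modn_small (ltnSn d)).
rewrite -[X in _ == X %% _](subnKC l_le) eqn_modDr.
by rewrite [l %% _]modn_small // ltnS.
Qed.

Lemma pchar_sum_bin_indicator d (L : {set 'I_d.+1}) m : d.+1 = p ^ k ->
  (\sum_(l in L) 'C(m + (d - l), d)%:R = [exists l in L, m == l %[mod d.+1]]%:R :> R)%R.
Proof.
move=> qE; rewrite -sum_mod_indicator; apply: eq_bigr => l _.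
by rewrite pchar_bin_indicator // -ltnS.
Qed.

End PcharBinomial.

Lemma sum_subsets_card_lt (V : nmodType) (T : finType) (X : {set T}) q
    (f : nat -> V) :
  (\sum_(S : {set T} | (S \subset X) && (#|S| < q)%N) f #|S| =
   \sum_(j < q) f j *+ 'C(#|X|, j))%R.
Proof.
transitivity (\sum_(S : {set T} | (S \subset X) && (#|S| < q)%N)
                \sum_(j < q | #|S| == j) f j)%R.
  by apply: eq_bigr => S /andP[_ S_lt]; rewrite (big_pred1 (Ordinal S_lt)).
rewrite (exchange_big_dep xpredT) //=; apply: eq_bigr => j _.
rewrite -cards_draws -sumr_const; apply: eq_bigl => S; rewrite inE.
by case: eqP => [->|_]; rewrite ?ltn_ord ?andbF ?andbT.
Qed.

Lemma card_subsets_card_lt (T : finType) q :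
  #|[set S : {set T} | #|S| < q]| = \sum_(i < q) 'C(#|T|, i).
Proof.
rewrite -sum1_card (eq_bigl (fun S : {set T} => (S \subset setT) && (#|S| < q))).
  apply: etrans (sum_subsets_card_lt [set: T] q (fun=> 1)) _.
  by rewrite cardsT; apply: eq_bigr => j _; rewrite natn.
by move=> S; rewrite inE subsetT.
Qed.

Section SubsetWeight.

Variables (R : nzRingType) (d : nat) (L : {set 'I_d.+1}).

Definition subset_weight (s : nat) : R :=
  ((s == 0)%:R - \sum_(l in L) 'C(d - l, d - s)%:R)%R.

Lemma sum_subset_weight (T : finType) (X : {set T}) :
  (\sum_(S : {set T} | (S \subset X) && (#|S| < d.+1)%N) subset_weight #|S| =
   1 - \sum_(l in L) 'C(#|X| + (d - l), d)%:R)%R.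
Proof.
rewrite sum_subsets_card_lt; under eq_bigr do rewrite mulrnBl.
rewrite sumrB big_ord_recl big1 => [|i _]; last by rewrite mul0rn.
rewrite bin0 addr0; congr (_ - _)%R.
rewrite (eq_bigr (fun j : 'I_d.+1 => \sum_(l in L) ('C(#|X|, j) * 'C(d - l, d - j))%:R)%R).
  by rewrite exchange_big; apply: eq_bigr => l _; rewrite -natr_sum binomial.Vandermonde.
by move=> j _; rewrite -sumrMnl; apply: eq_bigr => l _; rewrite mulnC natrM mulr_natr.
Qed.

Lemma sum_inclusion_weight (T : finType) (A B : {set T}) :
  (\sum_(S in [set S : {set T} | (#|S| < d.+1)%N])
     (S \subset A)%:R * subset_weight #|S| * (S \subset B)%:R =
   1 - \sum_(l in L) 'C(#|A :&: B| + (d - l), d)%:R)%R.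
Proof.
rewrite -sum_subset_weight big_mkcond [RHS]big_mkcond; apply: eq_bigr => S _.
rewrite inE subsetI.
by case: (S \subset A); case: (S \subset B); rewrite ?mul1r ?mulr1 ?mul0r ?mulr0 ?if_same.
Qed.

End SubsetWeight.

Lemma leq_card_biorthogonal (R : fieldType) (U V : finType) (A : {set U})
    (B : {set V}) (f : U -> V -> R) (g : V -> U -> R) :
  {in A &, forall x y, \sum_(v in B) f x v * g v y = (x == y)%:R}%R ->
  #|A| <= #|B|.
Proof.
move=> fg.
pose M := (\matrix_(i < #|A|, j < #|B|) f (enum_val i) (enum_val j))%R.
pose N := (\matrix_(j < #|B|, i < #|A|) g (enum_val j) (enum_val i))%R.
have MN : (M *m N = 1%:M)%R.
  apply/matrixP => i i'; rewrite !mxE; under eq_bigr do rewrite !mxE.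
  rewrite -(big_enum_val (fun v => f (enum_val i) v * g v (enum_val i'))%R).
  by rewrite fg ?enum_valP // (inj_eq enum_val_inj).
rewrite -(mxrank1 R #|A|) -MN.
exact: leq_trans (mxrankM_maxl _ _) (rank_leq_col _).
Qed.

Theorem mainTheorem15 (q n : nat) (L : {set 'I_q}) (F : {set {set 'I_n}}) :
  prime_power q ->
  modular_L_avoiding L F ->
  modular_L_intersecting L F ->
  (#|F| <= \sum_(0 <= i < q) 'C(n, i))%N.
Proof.
move=> [p [k [p_pr [_ qE]]]].
case: q L qE => [|d] L qE avoid intersect.
  have : 0 < p ^ k by rewrite expn_gt0 prime_gt0.
  by rewrite -qE.
have := card_subsets_card_lt 'I_n d.+1; rewrite card_ord big_mkord => <-.
pose f (A S : {set 'I_n}) : 'F_p := ((S \subset A)%:R * subset_weight 'F_p L #|S|)%R.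
pose g (S B : {set 'I_n}) : 'F_p := (S \subset B)%:R%R.
apply: (leq_card_biorthogonal (f := f) (g := g)) => A B AF BF.
rewrite sum_inclusion_weight (pchar_sum_bin_indicator (pchar_Fp p_pr) _ _ qE).
have [<-|AB] := eqVneq A B.
  rewrite setIid; case: existsP => [[l /andP[lL /eqP]]|_]; last by rewrite subr0.
  by move/(avoid A AF l lL).
have [l lL ABl] := intersect A B AF BF AB.
suff -> : [exists l in L, #|A :&: B| == l %[mod d.+1]] by rewrite subrr.
by apply/existsP; exists l; rewrite lL; apply/eqP.
Qed.
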